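(* Let $V,W$ be complex vector spaces, let $M=(M_1,\dots,M_s)\in\mathrm{Hom}(V,W)^s$, and suppose $\mathrm{rk}(M)\geq s$. Then there is $v\in V$ such that the span $\langle M_1v,\dots,M_sv\rangle\subseteq W$ has dimension $s$.
   Context: Rank of a tuple: for vector spaces $V,W$ and $M=(M_1,\dots,M_s)\in\mathrm{Hom}(V,W)^s$, $\mathrm{rk}(M)$ is the infimum of $\mathrm{rk}(\sum_i\lambda_iM_i)\in\mathbb{Z}_{\ge0}\cup\{\infty\}$ over all nonzero $(\lambda_1,\dots,\lambda_s)\in\mathbb{C}^s$ (so $\mathrm{rk}(M)=\infty$ if $s=0$). *)

From HB Require Import structures.
From mathcomp Require Import all_boot all_order all_algebra.
Set Implicit Arguments. Unset Strict Implicit. Unset Printing Implicit Defensive.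
Import Order.TTheory GRing.Theory Num.Theory.
Local Open Scope ring_scope.

Definition lin_indep (F : fieldType) (W : lmodType F) (k : nat)
  (u : 'I_k -> W) : Prop :=
  forall c : 'I_k -> F, \sum_(i < k) c i *: u i = 0 -> forall i, c i = 0.

Definition dim_ge (F : fieldType) (W : lmodType F) (P : W -> Prop) (k : nat)
  : Prop :=
  exists u : 'I_k -> W, (forall i, P (u i)) /\ lin_indep u.

Definition dim_eq (F : fieldType) (W : lmodType F) (P : W -> Prop) (k : nat)
  : Prop := dim_ge P k /\ ~ dim_ge P k.+1.

Definition image_of (F : fieldType) (V W : lmodType F) (f : V -> W) : W -> Prop :=
  fun w => exists v, w = f v.

Definition span_of (F : fieldType) (W : lmodType F) (k : nat) (u : 'I_k -> W)
  : W -> Prop :=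
  fun w => exists c : 'I_k -> F, w = \sum_(i < k) c i *: u i.

(* rk(f) >= k for a linear map f (dim of image >= k; rank may be infinite). *)
Definition rank_ge (F : fieldType) (V W : lmodType F) (f : V -> W) (k : nat)
  : Prop := dim_ge (image_of f) k.

(* rk(M) >= k for a tuple M = (M_1,...,M_s): every nonzero linear combination
   sum_i lambda_i M_i has rank >= k (for s = 0 this holds vacuously, rk = oo). *)
Definition tuple_rank_ge (F : fieldType) (V W : lmodType F) (s : nat)
  (M : 'I_s -> {linear V -> W}) (k : nat) : Prop :=
  forall lam : 'I_s -> F, (exists i, lam i != 0) ->
    rank_ge (fun v => \sum_(i < s) lam i *: M i v) k.

From HB Require Import structures.
From mathcomp Require Import all_boot all_order all_algebra.
From Stdlib Require Import Classical.
Set Implicit Arguments. Unset Strict Implicit. Unset Printing Implicit Defensive.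
Import Order.TTheory GRing.Theory Num.Theory.
Local Open Scope ring_scope.

(* Choose v for which the span of M_1 v, ..., M_s v has maximal dimension r,
   with basis u, where u_j = sum_i c_ji M_i v.  If r < s, the M_i v are
   dependent, so some nonzero combination M_lam = sum_i lam_i M_i kills v.
   Then M_lam x lies in the span of u for every x: otherwise (u, M_lam x) is
   independent, hence so is its perturbation (u_j + t sum_i c_ji M_i x,
   t M_lam x) for a suitable t != 0, and this family lies in the span at
   v + t x, contradicting maximality.  So the image of M_lam has dimension at
   most r < s, contradicting rk(M) >= s.  Only the perturbation needs the
   field to be infinite. *)

Section Families.
Variables (F : fieldType) (W : lmodType F).

Lemma eq_lin_indep k (f g : 'I_k -> W) : f =1 g -> lin_indep f -> lin_indep g.
Proof.
by move=> fg hf c hc; apply: hf; rewrite -[RHS]hc; apply: eq_bigr => i _; rewrite fg.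
Qed.

Lemma lin_indep_scale k (f : 'I_k -> W) (d : 'I_k -> F) :
  (forall i, d i != 0) -> lin_indep f -> lin_indep (fun i => d i *: f i).
Proof.
move=> d0 hf c hc i.
have cd0 : forall i, c i * d i = 0.
  by apply: hf; rewrite -[RHS]hc; apply: eq_bigr => j _; rewrite scalerA.
by have /eqP := cd0 i; rewrite mulf_eq0 (negbTE (d0 i)) orbF => /eqP.
Qed.

Lemma not_lin_indep_coef k (f : 'I_k -> W) :
  ~ lin_indep f ->
  exists2 c : 'I_k -> F, \sum_(i < k) c i *: f i = 0 & exists i, c i != 0.
Proof.
move=> hf; apply: NNPP => hn; apply: hf => c hc i; apply: NNPP => ci; apply: hn.
by exists c => //; exists i; apply/eqP.
Qed.

Lemma dim_ge0 (P : W -> Prop) : dim_ge P 0.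
Proof. by exists (fun _ => 0); split; [case | move=> c _ []]. Qed.

Lemma span_of_gen k (y : 'I_k -> W) i : span_of y (y i).
Proof.
exists (fun l => (l == i)%:R); rewrite (bigD1 i) //= eqxx scale1r big1 ?addr0 //.
by move=> j /negbTE ->; rewrite scale0r.
Qed.

Lemma sum_scale_mulmx n k (X : 'M[F]_(n, k)) (y : 'I_k -> W) (c : 'rV[F]_n) :
  \sum_(i < n) c 0 i *: (\sum_(j < k) X i j *: y j)
   = \sum_(j < k) (c *m X) 0 j *: y j.
Proof.
under eq_bigr do rewrite scaler_sumr.
rewrite exchange_big /=; apply: eq_bigr => j _.
by rewrite mxE scaler_suml; apply: eq_bigr => i _; rewrite scalerA.
Qed.

Section Coordinates.
Variables (n k : nat) (X : 'M[F]_(n, k)) (y : 'I_k -> W) (f : 'I_n -> W).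
Hypothesis f_coord : forall i, f i = \sum_(j < k) X i j *: y j.

Lemma lin_indep_row_free : lin_indep f -> row_free X.
Proof.
move=> hf; apply: inj_row_free => c cX0; apply/rowP => i; rewrite mxE.
apply: (hf (c 0)); under eq_bigr do rewrite f_coord.
by rewrite sum_scale_mulmx cX0; apply: big1 => j _; rewrite mxE scale0r.
Qed.

Lemma row_free_lin_indep : lin_indep y -> row_free X -> lin_indep f.
Proof.
move=> hy rf c hc i.
have : \row_l c l *m X = 0 *m X.
  apply/rowP => j; rewrite mul0mx [RHS]mxE; apply: (hy (fun j => (\row_l c l *m X) 0 j)).
  rewrite -sum_scale_mulmx -[RHS]hc; apply: eq_bigr => l _; by rewrite f_coord mxE.
by move/(row_free_inj rf)/rowP/(_ i); rewrite !mxE.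
Qed.

End Coordinates.

Lemma lin_indep_leq_span n m (x : 'I_n -> W) (y : 'I_m -> W) :
  (forall i, span_of y (x i)) -> lin_indep x -> (n <= m)%N.
Proof.
move=> hx hi; have [A hA] := fin_all_exists hx.
have /eqP <- : row_free (\matrix_(i < n, j < m) A i j).
  apply: (lin_indep_row_free (y := y) _ hi) => i.
  by rewrite hA; apply: eq_bigr => j _; rewrite mxE.
exact: rank_leq_col.
Qed.

Definition fam_rcons k (e : 'I_k -> W) (w : W) : 'I_k.+1 -> W :=
  fun i => if insub (val i) is Some j then e j else w.

Lemma fam_rcons_widen k (e : 'I_k -> W) w j :
  fam_rcons e w (widen_ord (leqnSn k) j) = e j.
Proof. by rewrite /fam_rcons /= valK. Qed.

Lemma fam_rcons_max k (e : 'I_k -> W) w : fam_rcons e w ord_max = w.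
Proof. by rewrite /fam_rcons /= insubF // ltnn. Qed.

Lemma ord_widen_or_max k (i : 'I_k.+1) :
  (exists j, i = widen_ord (leqnSn k) j) \/ i = ord_max.
Proof.
case: (ltnP i k) => h; [left; exists (Ordinal h) | right]; apply: val_inj => //=.
by apply/eqP; rewrite eqn_leq h -ltnS ltn_ord.
Qed.

Lemma fam_rcons_prop (P : W -> Prop) k (e : 'I_k -> W) w :
  (forall j, P (e j)) -> P w -> forall i, P (fam_rcons e w i).
Proof.
move=> he hw i.
by case: (ord_widen_or_max i) => [[j ->]|->]; rewrite ?fam_rcons_widen ?fam_rcons_max.
Qed.

Lemma lin_indep_rcons k (e : 'I_k -> W) w :
  lin_indep e -> ~ span_of e w -> lin_indep (fam_rcons e w).
Proof.
move=> he hw c; rewrite big_ord_recr /= fam_rcons_max.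
under eq_bigr do rewrite fam_rcons_widen.
move=> hc; have cmax0 : c ord_max = 0.
  apply: NNPP => /eqP nz; apply: hw.
  exists (fun j => - (c ord_max)^-1 * c (widen_ord (leqnSn k) j)).
  have /(congr1 (fun z => (c ord_max)^-1 *: z)) :
      c ord_max *: w = - \sum_(j < k) c (widen_ord (leqnSn k) j) *: e j.
    by apply/eqP; rewrite -addr_eq0 addrC hc.
  rewrite scalerA mulVf // scale1r => ->.
  rewrite scalerN scaler_sumr -sumrN; apply: eq_bigr => j _.
  by rewrite scalerA mulNr scaleNr.
move: hc; rewrite cmax0 scale0r addr0 => /he hc0 i.
by case: (ord_widen_or_max i) => [[j ->]|->].
Qed.

Lemma maximal_lin_indep_span (P : W -> Prop) k (u : 'I_k -> W) :
  (forall j, P (u j)) -> lin_indep u -> ~ dim_ge P k.+1 ->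
  forall w, P w -> span_of u w.
Proof.
move=> hu hi hmax w hw; apply: NNPP => nw; apply: hmax.
by exists (fam_rcons u w); split; [exact: fam_rcons_prop | exact: lin_indep_rcons].
Qed.

Lemma dim_ge_maximal (P : W -> Prop) n :
  (forall k, dim_ge P k -> (k <= n)%N) -> exists k, dim_ge P k /\ ~ dim_ge P k.+1.
Proof.
move=> hb; apply: NNPP => hn.
have hP k : dim_ge P k.
  elim: k => [|k IH]; first exact: dim_ge0.
  by apply: NNPP => nk; apply: hn; exists k.
by have := hb _ (hP n.+1); rewrite ltnn.
Qed.

Lemma exists_lin_indep_coords (I : finType) (g : I -> W) :
  exists k (e : 'I_k -> W) (G : I -> 'I_k -> F),
    lin_indep e /\ forall i, g i = \sum_(j < k) G i j *: e j.
Proof.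
pose P := span_of (fun j : 'I_#|I| => g (enum_val j)).
have [k [[e [he hi]] hmax]] : exists k, dim_ge P k /\ ~ dim_ge P k.+1.
  by apply: (@dim_ge_maximal _ #|I|) => k [e [he hi]]; exact: lin_indep_leq_span he hi.
have hg i : span_of e (g i).
  apply: (maximal_lin_indep_span he hi hmax).
  by rewrite -[i]enum_rankK; apply: span_of_gen.
have [G hG] := fin_all_exists hg.
by exists k, e, G.
Qed.

End Families.

Lemma exists_nonzero_nonroot (F : numFieldType) (p : {poly F}) :
  p != 0 -> exists2 x : F, x != 0 & ~~ root p x.
Proof.
move=> p0; apply: NNPP => hn.
pose xs := [seq (i.+1)%:R : F | i <- iota 0 (size p)].
have hr : all (root p) xs.
  apply/allP => x /mapP [i _ ->]; apply: NNPP => nr; apply: hn.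
  by exists (i.+1)%:R; [rewrite pnatr_eq0 | apply/negP].
have hu : uniq xs.
  by rewrite map_inj_uniq ?iota_uniq // => i j /eqP; rewrite eqr_nat eqSS => /eqP.
by have := max_poly_roots p0 hr hu; rewrite size_map size_iota ltnn.
Qed.

Lemma nonroot_char_poly_unitmx (F : fieldType) n (A : 'M[F]_n) a :
  ~~ root (char_poly A) a -> (a%:M - A) \in unitmx.
Proof.
rewrite -eigenvalue_root_char; apply: contraR => nu; apply/eigenvalueP.
have /det0P [v nz hv] : \det (a%:M - A) == 0 by rewrite unitmxE unitfE negbK in nu.
exists v => //; rewrite mulmxBr mul_mx_scalar in hv.
by apply/eqP; rewrite eq_sym -subr_eq0 hv.
Qed.

(* In coordinates, the family is (Ca + t Cb) e with Ca row free, say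
   Ca B = 1; then (Ca + t Cb) B = 1 + t Cb B, which is invertible as soon as
   1/t avoids the finitely many roots of the characteristic polynomial of
   -Cb B. *)
Lemma lin_indep_perturb (F : numFieldType) (W : lmodType F) n (a b : 'I_n -> W) :
  lin_indep a -> exists2 t : F, t != 0 & lin_indep (fun i => a i + t *: b i).
Proof.
move=> hai.
pose ab (x : 'I_n + 'I_n) := match x with inl i => a i | inr i => b i end.
have [k [e [G [he hG]]]] := exists_lin_indep_coords ab.
pose Ca := \matrix_(i < n, j < k) G (inl i) j.
pose Cb := \matrix_(i < n, j < k) G (inr i) j.
have ha i : a i = \sum_(j < k) Ca i j *: e j.
  by have /= -> := hG (inl i); apply: eq_bigr => j _; rewrite mxE.
have hb i : b i = \sum_(j < k) Cb i j *: e j.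
  by have /= -> := hG (inr i); apply: eq_bigr => j _; rewrite mxE.
have /row_freeP [B hB] := lin_indep_row_free ha hai.
pose N := Cb *m B.
have [x x0 nr] := exists_nonzero_nonroot (monic_neq0 (char_poly_monic (- N))).
exists x^-1; first by rewrite invr_eq0.
apply: (@row_free_lin_indep _ _ _ _ (Ca + x^-1 *: Cb) e).
- move=> i; rewrite ha hb scaler_sumr -big_split; apply: eq_bigr => j _ /=.
  by rewrite !mxE scalerDl scalerA.
- exact: he.
have U : (Ca + x^-1 *: Cb) *m B \in unitmx.
  rewrite mulmxDl hB -scalemxAl -/N.
  have -> : 1%:M + x^-1 *: N = x^-1 *: (x%:M - - N).
    by rewrite opprK scalerDr scale_scalar_mx mulVf.
  by rewrite unitmxZ ?unitfE ?invr_eq0 // nonroot_char_poly_unitmx.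
by rewrite /row_free eqn_leq rank_leq_row /= -{1}(mxrank_unit U) mxrankM_maxl.
Qed.

Section TupleRank.
Variables (F : numFieldType) (V W : lmodType F) (s : nat).
Variable M : 'I_s -> {linear V -> W}.

Definition tuple_comb (lam : 'I_s -> F) (v : V) : W := \sum_(i < s) lam i *: M i v.

Definition tuple_span (v : V) : W -> Prop := span_of (fun i : 'I_s => M i v).

Lemma tuple_combDZ lam v t x :
  tuple_comb lam (v + t *: x) = tuple_comb lam v + t *: tuple_comb lam x.
Proof.
rewrite /tuple_comb scaler_sumr -big_split; apply: eq_bigr => i _ /=.
by rewrite linearD linearZ /= scalerDr !scalerA mulrC.
Qed.

Section MaximalSpan.
Variables (r : nat) (v0 : V) (u : 'I_r -> W) (cc : 'I_r -> 'I_s -> F).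
Hypotheses (u_comb : forall j, u j = tuple_comb (cc j) v0) (u_indep : lin_indep u).
Hypothesis span_max : forall v, ~ dim_ge (tuple_span v) r.+1.

Lemma tuple_comb_kernel_span lam :
  tuple_comb lam v0 = 0 -> forall x, span_of u (tuple_comb lam x).
Proof.
move=> lam_v0 x; apply: NNPP => notin.
have [t t0 indep] := lin_indep_perturb (fam_rcons (fun j => tuple_comb (cc j) x) 0)
  (lin_indep_rcons u_indep notin).
apply: (span_max (v := v0 + t *: x)).
exists (fam_rcons (fun j => tuple_comb (cc j) (v0 + t *: x))
                  (tuple_comb lam (v0 + t *: x))).
split; first by apply: fam_rcons_prop => [j|]; [exists (cc j) | exists lam].
pose d (i : 'I_r.+1) : F := if i == ord_max then t else 1.
have d0 i : d i != 0 by rewrite /d; case: ifP; rewrite ?oner_eq0.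
apply: eq_lin_indep (lin_indep_scale d0 indep) => i.
have not_max j : (widen_ord (leqnSn r) j == ord_max) = false.
  by apply/negbTE; rewrite -val_eqE /= neq_ltn ltn_ord.
case: (ord_widen_or_max i) => [[j ->]|->];
  rewrite /d ?not_max ?eqxx !(fam_rcons_widen, fam_rcons_max) tuple_combDZ.
- by rewrite scale1r u_comb.
- by rewrite scaler0 addr0 lam_v0 add0r.
Qed.

End MaximalSpan.

Hypothesis rank_M : tuple_rank_ge M s.

Lemma tuple_span_dim_step r :
  (r < s)%N -> (exists v, dim_ge (tuple_span v) r) ->
  exists v, dim_ge (tuple_span v) r.+1.
Proof.
move=> rs [v0 [u [u_span u_indep]]]; apply: NNPP => hn.
have span_max v : ~ dim_ge (tuple_span v) r.+1 by move=> hv; apply: hn; exists v.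
have [cc u_comb] := fin_all_exists u_span.
have : ~ lin_indep (fun i => M i v0).
  move=> M_v0_indep; move: rs; rewrite ltnNge => /negP; apply.
  apply: (lin_indep_leq_span _ M_v0_indep) => i.
  exact: (maximal_lin_indep_span u_span u_indep (span_max v0) (span_of_gen _ i)).
case/not_lin_indep_coef => lam lam_v0 lam_nz.
have [z [z_img z_indep]] := rank_M lam_nz.
move: rs; rewrite ltnNge => /negP; apply.
apply: (lin_indep_leq_span _ z_indep) => i.
by have [x ->] := z_img i; apply: (tuple_comb_kernel_span u_comb).
Qed.

Lemma tuple_span_dim_ge k : (k <= s)%N -> exists v, dim_ge (tuple_span v) k.
Proof.
elim: k => [|k IH] ks; first by exists 0; apply: dim_ge0.
exact: tuple_span_dim_step (IH (ltnW ks)).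
Qed.

End TupleRank.

Unset Implicit Arguments.

Theorem lemma3p5 (C : numClosedFieldType) (V W : lmodType C) (s : nat)
  (M : 'I_s -> {linear V -> W}) :
  tuple_rank_ge M s ->
  exists v : V, dim_eq (span_of (fun i : 'I_s => M i v)) s.
Proof.
move=> rank_M; have [v hv] := tuple_span_dim_ge rank_M (leqnn s).
exists v; split => // [[u [u_span u_indep]]].
by have := lin_indep_leq_span u_span u_indep; rewrite ltnn.
Qed.
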